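(* For any hypothesis class $\mathcal{H}\subseteq\{0,1\}^{\mathcal{X}}$ and time horizon $T$, $$\inf_{\mathcal{A}}\operatorname{M}_{\mathcal{A}}(T,\mathcal{H}) \le \inf_{w\in\mathbb{N}}\Bigl\{\operatorname{AL}_w(\mathcal{H}) + 2\sqrt{(w-1)T}\Bigr\},$$ where the infimum on the left is over all (possibly randomized) online learners operating under apple tasting feedback.
   Context: Online binary classification: over rounds $t=1,\dots,T$, an adversary picks $(x_t,y_t)\in\mathcal{X}\times\{0,1\}$ and reveals $x_t$; the learner $\mathcal{A}$ (possibly randomized) outputs $\hat y_t=\mathcal{A}(x_t)\in\{0,1\}$ based on the history; under apple tasting feedback the learner observes $y_t$ only if $\hat y_t=1$. $\operatorname{M}_{\mathcal{A}}(T,\mathcal{H}) := \sup_{h\in\mathcal{H}}\sup_{x_1,\dots,x_T}\mathbb{E}\bigl[\sum_{t=1}^T \mathbb{1}\{\mathcal{A}(x_t)\neq h(x_t)\}\bigr]$ (labels $y_t=h(x_t)$, expectation over the learner's randomness). AL tree of width $w\in\mathbb{N}=\{1,2,\dots\}$ and depth $d$: a binary string $u$ is an internal node if $|u|<d$ and $u$ has fewer than $w$ ones; the tree assigns $x_u\in\mathcal{X}$ to each internal node. A path is a binary string $\sigma$ whose proper prefixes are all internal nodes but which is not itself one. The tree is shattered by $\mathcal{H}$ if for every path $\sigma$ some $h\in\mathcal{H}$ satisfies $h(x_{(\sigma_1,\dots,\sigma_{i-1})})=\sigma_i$ for all $i\le|\sigma|$. $\operatorname{AL}_w(\mathcal{H})$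 is the largest $d$ such that such a tree of width $w$ and depth $d$ is shattered ($\infty$ if unbounded, $0$ if none). *)

From Stdlib Require Import Reals List Arith.
Import ListNotations.
Open Scope R_scope.

Definition ones (u : list bool) : nat := count_occ Bool.bool_dec u true.

Definition internal (w d : nat) (u : list bool) : Prop :=
  (length u < d)%nat /\ (ones u < w)%nat.

Definition is_path (w d : nat) (sigma : list bool) : Prop :=
  (forall i, (i < length sigma)%nat -> internal w d (firstn i sigma))
  /\ ~ internal w d sigma.

(* An AL tree assigns x_u to each node u (only internal nodes matter).
   It is shattered by H if every path is realized by some h in H:
   h(x_{sigma_1..sigma_{i-1}}) = sigma_i for all i <= |sigma|. *)
Definition AL_shattered {X : Type} (H : (X -> bool) -> Prop)
    (w d : nat) (tr : list bool -> X) : Prop :=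
  forall sigma, is_path w d sigma ->
    exists h, H h /\
      forall i, (i < length sigma)%nat ->
        h (tr (firstn i sigma)) = nth i sigma false.

Definition AL_shatterable {X : Type} (H : (X -> bool) -> Prop) (w d : nat) : Prop :=
  exists tr : list bool -> X, AL_shattered H w d tr.

(* AL_w(H) <= d : every shattered tree of width w has depth at most d
   (AL_w(H) = infinity is never bounded; AL_w(H) = 0 if none is shattered) *)
Definition AL_le {X : Type} (H : (X -> bool) -> Prop) (w d : nat) : Prop :=
  forall d', AL_shatterable H w d' -> (d' <= d)%nat.

(* history entry: (x_s, prediction yhat_s, feedback) where the feedback is
   Some y_s if yhat_s = true and None otherwise (apple tasting). *)
Definition hist_entry (X : Type) : Type := (X * bool * option bool)%type.

(* A (behavioural) randomized learner: given the history so far and the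
   current instance x_t, the probability of predicting yhat_t = 1. *)
Definition Learner (X : Type) : Type := list (hist_entry X) -> X -> R.

Definition valid_learner {X : Type} (A : Learner X) : Prop :=
  forall hist x, 0 <= A hist x <= 1.

Fixpoint exp_mistakes {X : Type} (A : Learner X) (h : X -> bool)
    (hist : list (hist_entry X)) (xs : list X) : R :=
  match xs with
  | [] => 0
  | x :: xs' =>
      let p := A hist x in
      let y := h x in
      p * ((if y then 0 else 1)
           + exp_mistakes A h (hist ++ [(x, true, Some y)]) xs')
      + (1 - p) * ((if y then 1 else 0)
           + exp_mistakes A h (hist ++ [(x, false, None)]) xs')
  end.

Definition M_le {X : Type} (A : Learner X) (T : nat)
    (H : (X -> bool) -> Prop) (c : R) : Prop :=
  forall h, H h -> forall xs : list X, length xs = T ->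
    exp_mistakes A h [] xs <= c.

(* The learner keeps a version space V containing the target, a width k and a depth d such
   that V shatters no AL tree of width k and depth d.  On an instance x, let V_y be the part of
   V labelling x by y.  If V_0 shatters no tree of width k and depth d-1, the learner predicts
   1: it sees the label, and a mistake (label 0) costs one unit of depth.  Otherwise V_1
   shatters no tree of width k-1 and depth d-1, since hanging the two trees below x would give
   a shattered tree of width k and depth d; the learner then predicts 1 only with probability
   p.  Seeing a 1 costs one unit of width (and of depth), which can happen at most w-1 times,
   and each round spent waiting for it costs an expected mistake of 1-p, hence (1-p)/p per unit
   of width; predicting 1 on a 0 costs p per round.  The potential
   d - 1 + p (rounds left) + (1-p)/p (k-1) thus bounds the expected number of mistakes, and
   p close to sqrt((w-1)/T) balances the last two terms. *)
From Stdlib Require Import Reals List Lra Lia ClassicalDescription.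
Import ListNotations.
Open Scope R_scope.

Lemma ones_cons_false u : ones (false :: u) = ones u.
Proof. apply count_occ_cons_neq; discriminate. Qed.

Lemma ones_cons_true u : ones (true :: u) = S (ones u).
Proof. apply count_occ_cons_eq; reflexivity. Qed.

Lemma is_path_cons k d b s :
  is_path (S k) (S d) (b :: s) -> is_path (if b then k else S k) d s.
Proof.
  intros [Hprefix Hleaf]; split.
  - intros i Hi.
    destruct (Hprefix (S i)) as [Hlen Hones]; [cbn; lia|].
    cbn [firstn length] in Hlen, Hones; split; [lia|].
    destruct b; [rewrite ones_cons_true in Hones | rewrite ones_cons_false in Hones]; lia.
  - intros [Hlen Hones]; apply Hleaf; split; cbn [length]; [lia|].
    destruct b; [rewrite ones_cons_true | rewrite ones_cons_false]; lia.
Qed.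

Section Shattering.

Context {X : Type}.
Implicit Types V W : (X -> bool) -> Prop.

Definition restrict V (x : X) (y : bool) : (X -> bool) -> Prop :=
  fun h => V h /\ h x = y.

Lemma AL_shatterable_subclass V W k d :
  (forall h, V h -> W h) -> AL_shatterable V k d -> AL_shatterable W k d.
Proof.
  intros HVW [tr Htr]; exists tr; intros s Hs.
  destruct (Htr s Hs) as [h [Hh Hrealize]].
  exists h; split; [apply HVW|]; assumption.
Qed.

Lemma not_AL_shatterable_pos V h (x : X) k d :
  V h -> ~ AL_shatterable V k d -> (1 <= k)%nat /\ (1 <= d)%nat.
Proof.
  intros Hh Hns.
  enough (k <> 0%nat /\ d <> 0%nat) by lia.
  split; intros H0; apply Hns; exists (fun _ => x); intros s [Hprefix _].
  all: exists h; split; [exact Hh|]; intros i Hi; destruct (Hprefix i Hi); lia.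
Qed.

Lemma AL_shatterable_join V x k d :
  AL_shatterable (restrict V x false) (S k) d ->
  AL_shatterable (restrict V x true) k d ->
  AL_shatterable V (S k) (S d).
Proof.
  intros [t0 Ht0] [t1 Ht1].
  exists (fun u => match u with [] => x | false :: u' => t0 u' | true :: u' => t1 u' end).
  intros [|b s] Hpath.
  - exfalso; apply (proj2 Hpath); split; cbn; lia.
  - pose proof (is_path_cons _ _ _ _ Hpath) as Htail.
    destruct b; [destruct (Ht1 s Htail) as [g [[Hg Hgx] Hrealize]]
                | destruct (Ht0 s Htail) as [g [[Hg Hgx] Hrealize]]].
    all: exists g; split; [exact Hg|].
    all: intros [|i] Hi; cbn; [exact Hgx | apply Hrealize; cbn in Hi; lia].
Qed.

End Shattering.

Section Learner.

Context {X : Type}.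

Record vstate := VState { vclass : (X -> bool) -> Prop; vwidth : nat; vdepth : nat }.

Definition zero_side_shattered (s : vstate) (x : X) : bool :=
  if excluded_middle_informative
       (AL_shatterable (restrict (vclass s) x false) (vwidth s) (vdepth s - 1))
  then true else false.

Lemma zero_side_shatteredP s x :
  reflect (AL_shatterable (restrict (vclass s) x false) (vwidth s) (vdepth s - 1))
          (zero_side_shattered s x).
Proof. unfold zero_side_shattered; destruct excluded_middle_informative; constructor; auto. Qed.

Definition update (s : vstate) (e : hist_entry X) : vstate :=
  match e with
  | (x, _, Some y) =>
      let V := restrict (vclass s) x y in
      if zero_side_shattered s x then
        if y then VState V (vwidth s - 1) (vdepth s - 1) else VState V (vwidth s) (vdepth s)
      else
        if y then VState V (vwidth s) (vdepth s) else VState V (vwidth s) (vdepth s - 1)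
  | (_, _, None) => s
  end.

Definition vstate_of (s0 : vstate) (hist : list (hist_entry X)) : vstate :=
  fold_left update hist s0.

Lemma vstate_of_snoc s0 hist e : vstate_of s0 (hist ++ [e]) = update (vstate_of s0 hist) e.
Proof. apply fold_left_app. Qed.

Definition predict_prob (p : R) (s : vstate) (x : X) : R :=
  if zero_side_shattered s x then p else 1.

Definition al_learner (s0 : vstate) (p : R) : Learner X :=
  fun hist x => predict_prob p (vstate_of s0 hist) x.

(* The bounds on width and depth follow from the rest unless X is empty. *)
Definition sound (h : X -> bool) (s : vstate) : Prop :=
  vclass s h /\ ~ AL_shatterable (vclass s) (vwidth s) (vdepth s)
  /\ (1 <= vwidth s)%nat /\ (1 <= vdepth s)%nat.

Lemma update_sound h s x b : sound h s -> sound h (update s (x, b, Some (h x))).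
Proof.
  intros (Hh & Hns & Hk & Hd).
  assert (Hmem : restrict (vclass s) x (h x) h) by (split; [exact Hh | reflexivity]).
  assert (Hsub : forall y, ~ AL_shatterable (restrict (vclass s) x y) (vwidth s) (vdepth s)).
  { intros y Hsh; apply Hns; revert Hsh.
    apply AL_shatterable_subclass; intros g [Hg _]; exact Hg. }
  cbn; destruct (zero_side_shatteredP s x) as [H0 | H0]; destruct (h x) eqn:Hx.
  - assert (H1 : ~ AL_shatterable (restrict (vclass s) x true) (vwidth s - 1) (vdepth s - 1)).
    { intros H1; apply Hns.
      destruct (vwidth s) as [|k]; [lia|]; destruct (vdepth s) as [|d]; [lia|].
      replace (S k - 1)%nat with k in H1 by lia; replace (S d - 1)%nat with d in H0, H1 by lia.
      apply AL_shatterable_join with x; assumption. }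
    pose proof (not_AL_shatterable_pos _ _ x _ _ Hmem H1).
    repeat split; cbn; auto; lia.
  - repeat split; cbn; auto.
  - repeat split; cbn; auto.
  - pose proof (not_AL_shatterable_pos _ _ x _ _ Hmem H0).
    repeat split; cbn; auto; lia.
Qed.

Definition potential (p : R) (s : vstate) (n : nat) : R :=
  INR (vdepth s) - 1 + p * INR n + (1 - p) / p * (INR (vwidth s) - 1).

Lemma potential_step p s x (y : bool) n :
  0 < p <= 1 -> (1 <= vwidth s)%nat -> (1 <= vdepth s)%nat ->
  let P := predict_prob p s x in
  P * ((if y then 0 else 1) + potential p (update s (x, true, Some y)) n)
  + (1 - P) * ((if y then 1 else 0) + potential p s n)
  <= potential p s (S n).
Proof.
  intros Hp Hk Hd; cbn.
  assert (Hpc : p * ((1 - p) / p) = 1 - p) by (field; lra).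
  unfold predict_prob, potential; rewrite S_INR.
  destruct (zero_side_shattered s x), y; cbn; rewrite ?minus_INR by lia; cbn.
  all: nra.
Qed.

Lemma mix_le P a b A B :
  0 <= P <= 1 -> a <= A -> b <= B -> P * a + (1 - P) * b <= P * A + (1 - P) * B.
Proof. intros HP Ha Hb; apply Rplus_le_compat; apply Rmult_le_compat_l; lra. Qed.

Lemma exp_mistakes_le_potential s0 p h :
  0 < p <= 1 -> forall xs hist, sound h (vstate_of s0 hist) ->
  exp_mistakes (al_learner s0 p) h hist xs <= potential p (vstate_of s0 hist) (length xs).
Proof.
  intros Hp xs; induction xs as [|x xs IH]; intros hist Hs.
  - destruct Hs as (_ & _ & Hk & Hd).
    apply le_INR in Hk, Hd; cbn in Hk, Hd.
    assert (0 <= (1 - p) / p) by (apply Rle_mult_inv_pos; lra).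
    unfold potential; cbn; nra.
  - pose proof Hs as (_ & _ & Hk & Hd).
    eapply Rle_trans; [|exact (potential_step p _ x (h x) _ Hp Hk Hd)].
    cbn [exp_mistakes length]; apply mix_le.
    + unfold al_learner, predict_prob; destruct zero_side_shattered; lra.
    + apply Rplus_le_compat_l; rewrite <- vstate_of_snoc.
      apply IH; rewrite vstate_of_snoc; apply update_sound; exact Hs.
    + assert (Hsame : vstate_of s0 (hist ++ [(x, false, None)]) = vstate_of s0 hist)
        by apply vstate_of_snoc.
      apply Rplus_le_compat_l; rewrite <- Hsame; apply IH; rewrite Hsame; exact Hs.
Qed.

End Learner.

Lemma exploration_rate a N eps :
  0 <= a -> 0 <= N -> 0 < eps ->
  exists p, 0 < p <= 1 /\ p * N + (1 - p) / p * a <= 2 * sqrt (a * N) + eps.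
Proof.
  intros Ha HN Heps.
  set (s := sqrt (a * N)).
  assert (Hs : 0 <= s) by apply sqrt_pos.
  assert (Hss : s * s = a * N) by (apply sqrt_sqrt; nra).
  destruct (Rle_dec N (s + eps / 2)) as [Hle | Hgt].
  - exists 1; split; [lra|].
    replace ((1 - 1) / 1 * a) with 0 by field; lra.
  - assert (HN' : 0 < N) by lra.
    set (q := (s + eps / 2) / N).
    assert (Hq : q * N = s + eps / 2) by (unfold q; field; lra).
    exists q; split; [split; [apply Rdiv_lt_0_compat; lra | nra]|].
    replace ((1 - q) / q * a) with (a * N / (s + eps / 2) - a) by (unfold q; field; lra).
    set (r := a * N / (s + eps / 2)).
    assert (Hr : r * (s + eps / 2) = a * N) by (unfold r; field; lra).
    assert (r <= s) by nra.
    lra.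
Qed.

Theorem lemma2 (X : Type) (H : (X -> bool) -> Prop) (T w d : nat) :
  (1 <= w)%nat -> AL_le H w d ->
  forall eps : R, 0 < eps ->
  exists A : Learner X, valid_learner A /\
    M_le A T H (INR d + 2 * sqrt ((INR w - 1) * INR T) + eps).
Proof.
  intros Hw Hal eps Heps.
  destruct (exploration_rate (INR w - 1) (INR T) eps) as [p [Hp Hbound]]; auto.
  { apply le_INR in Hw; cbn in Hw; lra. }
  { apply pos_INR. }
  exists (al_learner (VState H w (S d)) p); split.
  - intros hist x; unfold al_learner, predict_prob; destruct zero_side_shattered; lra.
  - intros h Hh xs Hlen.
    assert (Hs : sound h (vstate_of (VState H w (S d)) [])).
    { repeat split; cbn; [exact Hh | intros Hsh; apply Hal in Hsh; lia | lia | lia]. }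
    eapply Rle_trans; [exact (exp_mistakes_le_potential _ p h Hp xs [] Hs)|].
    unfold potential; cbn -[INR]; rewrite Hlen, S_INR; lra.
Qed.
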